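(* Let $k$ be a positive integer and let $G$ be a graph that is not $(k+1)$-connected and has minimum degree at least $\frac{3k-1}{2}$. Then: (1) If $(S,K)\in P_0(G)$ and $(S',K')\in P(G)$ are distinct, then $K\subseteq K'$ or $(K\cup S)\cap(K'\cup S')=S\cap S'$. (2) If $(S,K),(S',K')\in P_0(G)$ are distinct, then $(K\cup S)\cap(K'\cup S')=S\cap S'$. (3) A pair $(S,K)\in P(G)$ lies in $P_0(G)$ if and only if there is no separator $S'$ of $G$ of minimum cardinality with $S'\cap K\ne\emptyset$.
   Context: Graphs are finite, simple, undirected. A graph is $k$-connected if it has more than $k$ vertices and removing any fewer than $k$ vertices leaves it connected. A separator of $G$ is a set $S\subseteq V(G)$ such that $G-S$ is disconnected. $P(G)$ is the set of pairs $(S,K)$ where $S$ is a separator of $G$ of minimum cardinality and $K\subseteq V(G)\setminus S$ is the vertex set of a connected component of $G-S$; it is partially ordered by $(S,K)\le(S',K')$ iff $K\subseteq K'$, and $P_0(G)$ denotes the set of minimal elements of $P(G)$. *)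

(* A finite simple graph: vertex type T : finType,
   adjacency e : rel T, assumed symmetric and irreflexive in the theorem. *)
From mathcomp Require Import all_boot.
Set Implicit Arguments. Unset Strict Implicit. Unset Printing Implicit Defensive.

Section Graph.
Variables (T : finType) (e : rel T).

Definition induced_rel (A : {set T}) : rel T :=
  [rel x y | [&& e x y, x \in A & y \in A]].

(* the induced subgraph G[A] is connected (the empty graph counts as connected) *)
Definition connected_in (A : {set T}) : Prop :=
  forall x y, x \in A -> y \in A -> connect (induced_rel A) x y.

Definition k_connected (k : nat) : Prop :=
  k < #|T| /\ forall X : {set T}, #|X| < k -> connected_in (~: X).

Definition deg (x : T) : nat := #|[set y | e x y]|.

Definition separator (S : {set T}) : Prop :=
  exists x y, [/\ x \notin S, y \notin S & ~~ connect (induced_rel (~: S)) x y].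

Definition min_separator (S : {set T}) : Prop :=
  separator S /\ forall S' : {set T}, separator S' -> #|S| <= #|S'|.

Definition component_of (S K : {set T}) : Prop :=
  exists2 x, x \notin S & K = [set y | connect (induced_rel (~: S)) x y].

Definition inP (S K : {set T}) : Prop := min_separator S /\ component_of S K.

(* (S, K) \in P_0(G): minimal w.r.t. (S,K) <= (S',K') iff K \subset K' *)
Definition inP0 (S K : {set T}) : Prop :=
  inP S K /\ forall S' K' : {set T}, inP S' K' -> K' \subset K -> K' = K.

End Graph.

(* A minimum separator S, of size kappa <= k, leaves two nonempty sides in
   G - S, and the degree bound makes every side larger than kappa / 2.  For two
   minimum separators S, S' with sides A, A' and B, B', the separators of two
   opposite corners (A :&: B and A' :&: B', say) have total size
   |S| + |S'| = 2 kappa, so when both corners are nonempty both are minimum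
   separators.  The degree bound prevents a side of one separator from lying
   inside the other, and this forces a pair of opposite nonempty corners.
   Hence a minimal component K of G - S meets a side Y of S' such that the
   separator of K :&: Y is minimum; minimality of K gives K \subset Y, so K
   avoids S', and counting shows that S misses the side of S' opposite to Y.
   This gives (1) and (3); (2) follows from (1) because a component K of G - S
   determines S as its neighbourhood. *)

From mathcomp Require Import all_boot zify.
Set Implicit Arguments. Unset Strict Implicit. Unset Printing Implicit Defensive.

Section Separations.
Variables (T : finType) (e : rel T).
Hypothesis e_sym : symmetric e.

Local Notation rel_minus S := (induced_rel e (~: S)).

Lemma rel_minus_sym (S : {set T}) : symmetric (rel_minus S).
Proof. by move=> x y; rewrite /induced_rel /= e_sym [(x \in _) && _]andbC. Qed.

Lemma connect_minus_closed (S X : {set T}) x z :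
  (forall a c, a \in X -> e a c -> c \notin S -> c \in X) ->
  x \in X -> connect (rel_minus S) x z -> z \in X.
Proof.
move=> clX + /connectP[p + ->]; elim: p x => [|y p IHp] x //= xX.
case/andP=> /and3P[exy _]; rewrite inE => yS; exact/IHp/(clX x y xX exy yS).
Qed.

Definition component (S : {set T}) (x : T) : {set T} :=
  [set y | connect (rel_minus S) x y].

Lemma component_disjoint (S : {set T}) x : x \notin S -> [disjoint component S x & S].
Proof.
move=> xS; rewrite disjoints_subset; apply/subsetP => y; rewrite inE => xy.
by apply: (connect_minus_closed _ _ xy); rewrite ?inE // => a c _ _; rewrite inE.
Qed.

(* [side S A]: [A] is a nonempty union of connected components of [G - S]. *)
Definition side (S A : {set T}) : Prop :=
  [/\ [disjoint A & S], A != set0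
    & forall a c, a \in A -> e a c -> (c \in A) || (c \in S)].

Lemma component_eq (S : {set T}) x y :
  y \in component S x -> component S y = component S x.
Proof.
rewrite inE => xy; apply/setP => v; rewrite !inE.
by rewrite (same_connect (sym_connect_sym (rel_minus_sym S)) xy).
Qed.

Lemma side_component_sub (S A : {set T}) x : side S A -> x \in A -> component S x \subset A.
Proof.
case=> _ _ clA xA; apply/subsetP => v; rewrite inE.
apply: connect_minus_closed xA => a c aA eac /negPf cS.
by move: (clA a c aA eac); rewrite cS orbF.
Qed.

Lemma side_separator (S A : {set T}) z :
  side S A -> z \notin A -> z \notin S -> separator e S.
Proof.
move=> sA zA zS; have [dAS /set0Pn[x xA] _] := sA.
exists x, z; split => //; first by rewrite (disjointFr dAS xA).
by apply: contra zA => xz; apply: subsetP (side_component_sub sA xA) _ _; rewrite inE.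
Qed.

Lemma component_side (S : {set T}) x : x \notin S -> side S (component S x).
Proof.
move=> xS; split; first exact: component_disjoint.
  by apply/set0Pn; exists x; rewrite inE connect0.
move=> a c xa eac; have aS := disjointFr (component_disjoint xS) xa.
move: xa; rewrite !inE => xa; case: (boolP (c \in S)) => cS; rewrite ?orbT // orbF.
by apply: (connect_trans xa); apply: connect1; rewrite /induced_rel /= eac !inE cS aS.
Qed.

Lemma side_compl (S A : {set T}) :
  side S A -> ~: (A :|: S) != set0 -> side S (~: (A :|: S)).
Proof.
case=> _ _ clA ne; split => //.
  by rewrite disjoints_subset; apply/subsetP => v; rewrite !inE negb_or => /andP[].
move=> a c; rewrite !inE negb_or => /andP[aA aS] eac.
case: (boolP (c \in S)) => cS; rewrite ?orbT // !orbF; apply: contra aA => cA.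
by move: (clA c a cA); rewrite e_sym (negbTE aS) orbF; apply.
Qed.

Lemma compl_sideK (S A : {set T}) : [disjoint A & S] -> ~: (~: (A :|: S) :|: S) = A.
Proof.
move=> dAS; apply/setP => v; rewrite !inE.
by case: (boolP (v \in A)) => [vA | _]; rewrite ?(disjointFr dAS vA) //=; case: (v \in S).
Qed.

Definition cut (S A : {set T}) : Prop := side S A /\ side S (~: (A :|: S)).

Lemma cut_compl (S A : {set T}) : cut S A -> cut S (~: (A :|: S)).
Proof. by case=> sA sA'; split; rewrite // compl_sideK //; case: sA. Qed.

Lemma component_cut (S : {set T}) x :
  x \notin S -> separator e S -> cut S (component S x).
Proof.
move=> xS [u [v [uS vS nuv]]]; have sK := component_side xS; split => //.
apply: side_compl => //; apply/set0Pn.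
have [uK | uK] := boolP (u \in component S x); last first.
  by exists u; rewrite in_setC in_setU negb_or uK.
exists v; rewrite !inE negb_or vS andbT; apply: contra nuv; rewrite inE in uK.
by rewrite -(same_connect (sym_connect_sym (rel_minus_sym S)) uK).
Qed.

Lemma cards_disjointU3 (A B C : {set T}) :
  [disjoint A & B] -> [disjoint A & C] -> [disjoint B & C] ->
  #|A :|: B :|: C| = #|A| + #|B| + #|C|.
Proof.
have cardsU_disjoint (X Y : {set T}) : [disjoint X & Y] -> #|X :|: Y| = #|X| + #|Y|.
  by move=> dXY; apply/eqP; rewrite (leq_card_setU X Y).2.
move=> dAB dAC dBC; rewrite !cardsU_disjoint //.
by rewrite -setI_eq0 setIUl !disjoint_setI0 // setU0.
Qed.

Lemma card_split (S S' B : {set T}) : [disjoint B & S'] ->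
  #|S| = #|S :&: B| + #|S :&: S'| + #|S :&: ~: (B :|: S')|.
Proof.
move=> dBS'; rewrite -cards_disjointU3 -?setIUr ?setUCr ?setIT //.
- exact: disjointW (subsetIr _ _) (subsetIr _ _) dBS'.
- apply: disjointW (subsetIr _ _) (subsetIr _ _) _.
  by rewrite disjoints_subset setCK subsetUl.
- apply: disjointW (subsetIr _ _) (subsetIr _ _) _.
  by rewrite disjoints_subset setCK subsetUr.
Qed.

Lemma min_separator_card_le (S S' : {set T}) :
  min_separator e S -> separator e S' -> #|S| <= #|S'|.
Proof. by case=> _; apply. Qed.

Lemma min_separator_card_eq (S S' : {set T}) :
  min_separator e S -> min_separator e S' -> #|S| = #|S'|.
Proof.
move=> mS mS'; apply/eqP; rewrite eqn_leq.
by rewrite !min_separator_card_le //; [case: mS | case: mS'].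
Qed.

Lemma min_separator_card_bound k (S : {set T}) :
  ~ k_connected e k.+1 -> min_separator e S -> #|S| <= k.
Proof.
move=> not_conn mS; rewrite leqNgt; apply/negP => kS; apply: not_conn; split.
  have [x [y [xS yS nxy]]] := mS.1.
  have xy : x != y by apply: contraNneq nxy => ->; rewrite connect0.
  have : S \subset ~: [set x; y].
    apply/subsetP => v vS; rewrite !inE; apply/norP.
    by split; [move: xS | move: yS]; apply: contraNneq => <-.
  by move/subset_leq_card; have := cardsC [set x; y]; rewrite cards2 xy /=; lia.
move=> X kX u v uX vX; apply: contraT => nuv.
have : separator e X by exists u, v; rewrite -!in_setC.
by move/(min_separator_card_le mS); lia.
Qed.

(* For sides [X] of [S] and [Y] of [S'], [corner S S' X Y] separates [X :&: Y]
   from the rest of the graph. *)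
Definition corner (S S' X Y : {set T}) : {set T} :=
  (S :&: Y) :|: (S :&: S') :|: (X :&: S').

Lemma corner_side (S S' X Y : {set T}) :
  side S X -> side S' Y -> X :&: Y != set0 -> side (corner S S' X Y) (X :&: Y).
Proof.
case=> dX _ cX [dY _ cY] nXY; split => //.
  rewrite disjoints_subset; apply/subsetP => v; rewrite !inE => /andP[vX vY].
  by rewrite (disjointFr dX vX) (disjointFr dY vY) vX.
move=> a c; rewrite !inE => /andP[aX aY] eac.
move: (cX a c aX eac) (cY a c aY eac).
by case: (c \in X); case: (c \in Y); case: (c \in S); case: (c \in S').
Qed.

Lemma corner_separator (S S' X Y : {set T}) :
  side S X -> side S' Y -> X :&: Y != set0 -> ~: (X :|: S) != set0 ->
  separator e (corner S S' X Y).
Proof.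
move=> sX sY nXY /set0Pn[z]; rewrite !inE negb_or => /andP[zX zS].
apply: (side_separator (corner_side sX sY nXY) (z := z)).
  by rewrite inE (negbTE zX).
by rewrite !inE (negbTE zX) (negbTE zS).
Qed.

Lemma corner_card (S S' X Y : {set T}) : [disjoint X & S] -> [disjoint Y & S'] ->
  #|corner S S' X Y| = #|S :&: Y| + #|S :&: S'| + #|X :&: S'|.
Proof.
move=> dXS dYS'; rewrite disjoint_sym in dXS; apply: cards_disjointU3.
- exact: disjointW (subsetIr _ _) (subsetIr _ _) dYS'.
- exact: disjointW (subsetIl _ _) (subsetIl _ _) dXS.
- exact: disjointW (subsetIl _ _) (subsetIl _ _) dXS.
Qed.

Lemma corner_card_ge (S S' X Y : {set T}) :
  min_separator e S -> side S X -> side S' Y -> X :&: Y != set0 ->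
  ~: (X :|: S) != set0 -> #|S| <= #|S :&: Y| + #|S :&: S'| + #|X :&: S'|.
Proof.
move=> mS sX sY nXY nX'; rewrite -corner_card; last by case: sY.
  exact/(min_separator_card_le mS)/corner_separator.
by case: sX.
Qed.

Lemma opposite_corners_tight (S S' A B : {set T}) :
  min_separator e S -> min_separator e S' -> cut S A -> cut S' B ->
  A :&: B != set0 -> ~: (A :|: S) :&: ~: (B :|: S') != set0 ->
  #|S :&: B| + #|S :&: S'| + #|A :&: S'| = #|S|.
Proof.
move=> mS mS' [sA sA'] [sB sB'] nAB nA'B'.
have [[dAS _ _] [dBS' _ _]] := (sA, sB).
have nA' : ~: (A :|: S) != set0 by case: sA'.
have nA : ~: (~: (A :|: S) :|: S) != set0 by rewrite compl_sideK //; case: sA.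
have := corner_card_ge mS sA sB nAB nA'.
have := corner_card_ge mS sA' sB' nA'B' nA.
have := card_split S dBS'; have := card_split S' dAS.
have := min_separator_card_eq mS mS'.
rewrite [S' :&: A]setIC [S' :&: S]setIC [S' :&: ~: _]setIC; lia.
Qed.

Lemma meets_side_or_compl (X B S' : {set T}) :
  ~~ (X \subset S') -> (X :&: B != set0) || (X :&: ~: (B :|: S') != set0).
Proof.
case/subsetPn => x xX xS'; case: (boolP (x \in B)) => xB; apply/orP; [left | right];
  by apply/set0Pn; exists x; rewrite !inE xX ?xB // negb_or xB.
Qed.

Lemma inP_cut (S K : {set T}) : inP e S K -> cut S K.
Proof. by case=> mS [x xS ->]; apply: component_cut xS mS.1. Qed.

Lemma inP0_side_sub (S K C X : {set T}) :
  inP0 e S K -> min_separator e C -> side C X -> X \subset K -> K \subset X.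
Proof.
move=> [_ minK] mC sX XK; have [dXC /set0Pn[x xX] _] := sX.
have sub := side_component_sub sX xX.
have iPC : inP e C (component C x) by split => //; exists x; rewrite ?(disjointFr dXC xX).
by rewrite -(minK _ _ iPC (subset_trans sub XK)).
Qed.

Lemma min_separator_side_adj (S K : {set T}) s :
  min_separator e S -> cut S K -> s \in S -> exists2 y, y \in K & e y s.
Proof.
move=> mS [sK sK'] sS; apply/exists_inP; apply: contraT => /exists_inP nadj.
have [dKS nK clK] := sK; have [_ /set0Pn[z]] := sK'.
rewrite !inE negb_or => /andP[zK zS] _.
have sKs : side (S :\ s) K.
  split => //; first exact: disjointWr (subsetDl S [set s]) dKS.
  move=> a c aK eac; case/orP: (clK a c aK eac) => [-> // | cS].
  rewrite !inE cS andbT; apply/orP; right; apply/eqP => cs.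
  by apply: nadj; exists a; rewrite // -cs.
have zSs : z \notin S :\ s by rewrite !inE (negbTE zS) andbF.
have := min_separator_card_le mS (side_separator sKs zK zSs).
by have := cardsD1 s S; rewrite sS; lia.
Qed.

Lemma inP_separator_sub (S S' K : {set T}) : inP e S K -> inP e S' K -> S \subset S'.
Proof.
move=> iP iP'; have cK := inP_cut iP; have [[dKS _ _] _] := cK.
have [[_ _ clK] _] := inP_cut iP'; apply/subsetP => s sS.
have [y yK eys] := min_separator_side_adj iP.1 cK sS.
by case/orP: (clK y s yK eys) => // sK; rewrite (disjointFr dKS sK) in sS.
Qed.

Lemma inP_separator_eq (S S' K : {set T}) : inP e S K -> inP e S' K -> S = S'.
Proof.
move=> iP iP'; apply/eqP.
by rewrite eqEsubset (inP_separator_sub iP iP') (inP_separator_sub iP' iP).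
Qed.

Lemma component_sub_side (S S' X : {set T}) x :
  side S' X -> x \in X -> x \notin S -> [disjoint component S x & S'] ->
  component S x \subset X.
Proof.
move=> [_ _ clX] xX xS dKS'; have [_ _ clK] := component_side xS.
apply/subsetP => v vK; suff : v \in X :&: component S x by rewrite inE => /andP[].
move: vK; rewrite inE; apply: connect_minus_closed; last by rewrite !inE xX connect0.
move=> a c; rewrite inE => /andP[aX aK] eac /negPf cS.
have cK : c \in component S x by move: (clK a c aK eac); rewrite cS orbF.
by move: (clX a c aX eac); rewrite inE cK (disjointFr dKS' cK) !orbF => ->.
Qed.

Lemma inP_sub_of_disjoint (S K S' K' : {set T}) :
  inP e S K -> inP e S' K' -> [disjoint K & S'] -> K' \subset K -> K \subset K'.
Proof.
case=> _ [x xS EK] iP' dKS' K'K; have {}EK : K = component S x := EK.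
have [sK' _] := inP_cut iP'; have [_ /set0Pn[y yK'] _] := sK'.
have yK := subsetP K'K y yK'; rewrite EK in yK dKS' *.
have yS : y \notin S by apply/negbT/(disjointFr (component_disjoint xS) yK).
by rewrite -(component_eq yK) in dKS' *; apply: component_sub_side sK' yK' yS dKS'.
Qed.

Section DegreeCondition.
Variable k : nat.
Hypotheses (e_irr : irreflexive e) (not_conn : ~ k_connected e k.+1)
  (deg_ge : forall x, 3 * k - 1 <= 2 * deg e x).

Lemma deg_side_lt (S A : {set T}) x : side S A -> x \in A -> deg e x < #|A| + #|S|.
Proof.
case=> _ _ clA xA; rewrite /deg.
have : [set y | e x y] \subset (A :\ x) :|: S.
  apply/subsetP => y; rewrite !inE => exy.
  case/orP: (clA x y xA exy) => [yA | ->]; last by rewrite orbT.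
  by rewrite yA andbT; apply/orP; left; apply: contraTneq exy => ->; rewrite e_irr.
move/subset_leq_card; have := (leq_card_setU (A :\ x) S).1.
by rewrite (cardsD1 x A) xA; lia.
Qed.

Lemma side_card_gt (S A : {set T}) : min_separator e S -> side S A -> #|S| < 2 * #|A|.
Proof.
move=> mS sA; have [_ /set0Pn[x xA] _] := sA.
have := deg_side_lt sA xA; have := deg_ge x.
by have := min_separator_card_bound not_conn mS; lia.
Qed.

Lemma card_meet_side_gt (S S' A Y : {set T}) :
  min_separator e S -> min_separator e S' -> cut S A -> A \subset S' -> side S' Y ->
  #|S| < 2 * #|S :&: Y|.
Proof.
move=> mS mS' [sA sA'] AS' sY; have [[dAS _ _] [dYS' _ _]] := (sA, sY).
have := min_separator_card_eq mS mS'.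
case: (eqVneq (~: (A :|: S) :&: Y) set0) => [A'Y0 | nA'Y].
  have : Y \subset S :&: Y.
    apply/subsetP => y yY; rewrite inE yY andbT; apply: contraT => yS.
    have yA : y \notin A by apply: contraFN (disjointFr dYS' yY); apply: subsetP.
    have : y \in ~: (A :|: S) :&: Y by rewrite !inE negb_or yA yS yY.
    by rewrite A'Y0 inE.
  by move/subset_leq_card; have := side_card_gt mS' sY; lia.
have nA : ~: (~: (A :|: S) :|: S) != set0 by rewrite compl_sideK //; case: sA.
have := corner_card_ge mS sA' sY nA'Y nA; have := card_split S' dAS.
have := side_card_gt mS sA; rewrite (setIidPr AS') [S' :&: S]setIC [S' :&: ~: _]setIC.
lia.
Qed.

Lemma side_not_subset_min_separator (S S' A B : {set T}) :
  min_separator e S -> min_separator e S' -> cut S A -> cut S' B -> ~~ (A \subset S').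
Proof.
move=> mS mS' cA [sB sB']; apply/negP => AS'; have [dBS' _ _] := sB.
have := card_meet_side_gt mS mS' cA AS' sB.
have := card_meet_side_gt mS mS' cA AS' sB'.
by have := card_split S dBS'; lia.
Qed.

Lemma crossing_tight_corner (S S' A B : {set T}) :
  min_separator e S -> min_separator e S' -> cut S A -> cut S' B ->
  exists Y, [/\ Y = B \/ Y = ~: (B :|: S'), A :&: Y != set0
    & #|S :&: Y| + #|S :&: S'| + #|A :&: S'| = #|S|].
Proof.
move=> mS mS' cA cB; have [[dBS' _ _] _] := cB.
have cA' := cut_compl cA; have cB' := cut_compl cB.
have rowA := meets_side_or_compl B (side_not_subset_min_separator mS mS' cA cB).
have rowA' := meets_side_or_compl B (side_not_subset_min_separator mS mS' cA' cB).
have colB := meets_side_or_compl A (side_not_subset_min_separator mS' mS cB cA).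
have colB' := meets_side_or_compl A (side_not_subset_min_separator mS' mS cB' cA).
rewrite ![B :&: _]setIC ![~: (B :|: S') :&: _]setIC in colB colB'.
have /orP[/andP[nAB nA'B'] | /andP[nAB' nA'B]] :
    (A :&: B != set0) && (~: (A :|: S) :&: ~: (B :|: S') != set0) ||
    (A :&: ~: (B :|: S') != set0) && (~: (A :|: S) :&: B != set0).
  move: rowA rowA' colB colB'.
  case: (A :&: B != set0); case: (A :&: ~: (B :|: S') != set0);
  by case: (~: (A :|: S) :&: B != set0); case: (~: (A :|: S) :&: ~: (B :|: S') != set0).
by exists B; split; [left | | apply: opposite_corners_tight].
exists (~: (B :|: S')); split; [right | | apply: opposite_corners_tight] => //.
by rewrite compl_sideK.
Qed.

Lemma inP0_sub_side (S K S' B : {set T}) :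
  inP0 e S K -> min_separator e S' -> cut S' B ->
  exists Y, [/\ Y = B \/ Y = ~: (B :|: S'), K \subset Y & S :&: ~: (Y :|: S') = set0].
Proof.
move=> iP0 mS' cB; have [iP _] := iP0; have mS := iP.1; have cK := inP_cut iP.
have [Y [hY nKY tight]] := crossing_tight_corner mS mS' cK cB.
have [sY _] : cut S' Y by case: hY => ->; last exact: cut_compl.
have [sK sK'] := cK; have [[dKS _ _] [dYS' _ _]] := (sK, sY).
have mC : min_separator e (corner S S' K Y).
  split; first by apply: corner_separator => //; case: sK'.
  by move=> S2 /(min_separator_card_le mS); rewrite (corner_card dKS dYS') tight.
have KY : K \subset Y.
  have := inP0_side_sub iP0 mC (corner_side sK sY nKY) (subsetIl K Y).
  by move/subset_trans; apply; apply: subsetIr.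
exists Y; split => //; apply/eqP; rewrite -cards_eq0.
move: tight; rewrite (disjoint_setI0 (disjointWl KY dYS')) cards0 addn0.
by have := card_split S dYS'; lia.
Qed.

Lemma inP0_disjoint_min_separator (S K S' : {set T}) :
  inP0 e S K -> min_separator e S' -> [disjoint K & S'].
Proof.
move=> iP0 mS'; have [u [_ [uS' _ _]]] := mS'.1.
have cB := component_cut uS' mS'.1.
have [Y [hY KY _]] := inP0_sub_side iP0 mS' cB.
have [[dYS' _ _] _] : cut S' Y by case: hY => ->; last exact: cut_compl.
exact: disjointWl KY dYS'.
Qed.

Lemma inP0_inP_nested_or_apart (S K S' K' : {set T}) :
  inP0 e S K -> inP e S' K' ->
  K \subset K' \/ (K :|: S) :&: (K' :|: S') = S :&: S'.
Proof.
move=> iP0 iP'; have cK' := inP_cut iP'; have [[dK'S' _ _] _] := cK'.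
have [[dKS _ _] _] := inP_cut iP0.1.
have [Y [[-> | ->] KY SK'0]] := inP0_sub_side iP0 iP'.1 cK'; [by left | right].
rewrite compl_sideK // in SK'0; apply/setP => v; rewrite !inE.
case: (boolP (v \in K)) => [vK | _] /=.
  move: (subsetP KY v vK); rewrite !inE negb_or (disjointFr dKS vK).
  by case/andP=> /negbTE -> /negbTE ->.
case: (boolP (v \in S)) => //= vS; have : v \notin S :&: K' by rewrite SK'0 inE.
by rewrite inE vS /= => /negbTE ->.
Qed.

Lemma inP0_apart (S K S' K' : {set T}) :
  inP0 e S K -> inP0 e S' K' -> (S, K) <> (S', K') ->
  (K :|: S) :&: (K' :|: S') = S :&: S'.
Proof.
move=> iP0 iP0' neq.
case: (inP0_inP_nested_or_apart iP0 iP0'.1) => [KK' | //].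
case: (inP0_inP_nested_or_apart iP0' iP0.1) => [K'K | E]; last by rewrite setIC E setIC.
have EK : K = K' by apply/eqP; rewrite eqEsubset KK' K'K.
by case: neq; rewrite -EK in iP0' *; rewrite (inP_separator_eq iP0.1 iP0'.1).
Qed.

Lemma inP0_iff_no_min_separator_meets (S K : {set T}) : inP e S K ->
  inP0 e S K <-> ~ exists S' : {set T}, min_separator e S' /\ S' :&: K != set0.
Proof.
move=> iP; split.
  move=> iP0 [S' [mS']]; rewrite setIC setI_eq0.
  by rewrite (inP0_disjoint_min_separator iP0 mS').
move=> nomeet; split => // S' K' iP' K'K; apply/eqP; rewrite eqEsubset K'K /=.
apply: (inP_sub_of_disjoint iP iP' _ K'K); rewrite -setI_eq0 setIC.
by case: (eqVneq (S' :&: K) set0) => // nS'K; case: nomeet; exists S'; case: iP'.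
Qed.

End DegreeCondition.
End Separations.

Theorem lemma3 (T : finType) (e : rel T) (k : nat) :
  symmetric e -> irreflexive e ->
  0 < k ->
  ~ k_connected e k.+1 ->
  (forall x : T, 3 * k - 1 <= 2 * deg e x) ->
  (* (1) *)
  (forall S K S' K' : {set T},
     inP0 e S K -> inP e S' K' -> (S, K) <> (S', K') ->
     K \subset K' \/ (K :|: S) :&: (K' :|: S') = S :&: S') /\
  (* (2) *)
  (forall S K S' K' : {set T},
     inP0 e S K -> inP0 e S' K' -> (S, K) <> (S', K') ->
     (K :|: S) :&: (K' :|: S') = S :&: S') /\
  (* (3) *)
  (forall S K : {set T},
     inP e S K ->
     (inP0 e S K <-> ~ exists S' : {set T}, min_separator e S' /\ S' :&: K != set0)).
Proof.
move=> e_sym e_irr _ not_conn deg_ge; split; [|split].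
- move=> S K S' K' iP0 iP' _.
  exact: (inP0_inP_nested_or_apart e_sym e_irr not_conn deg_ge iP0 iP').
- move=> S K S' K'; exact: (inP0_apart e_sym e_irr not_conn deg_ge).
- move=> S K; exact: (inP0_iff_no_min_separator_meets e_sym e_irr not_conn deg_ge).
Qed.
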